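(* Let $\succ$ be a binary relation on $\mathcal{F}$ satisfying Axioms A1–A7 below. Then for every $f\in\mathcal{F}$, the set $\{x\in X:x\Join f\}$ is non-empty. Axioms: (A1) $\succ$ is asymmetric and transitive, and its restriction to $X$ is non-trivial and negatively transitive. (A2) For all $f,g,h\in\mathcal{F}$, $\{\alpha\in[0,1]:\alpha f+(1-\alpha)g\succ h\}$ and $\{\alpha\in[0,1]:h\succ\alpha f+(1-\alpha)g\}$ are open in $[0,1]$. (A3) For all $f,g\in\mathcal{F}$, $x\in X$, $\alpha\in(0,1)$: $f\succ g$ iff $\alpha f+(1-\alpha)x\succ\alpha g+(1-\alpha)x$. (A4) For all $x\in X$, $\{f:f\succ x\}$ and $\{f:x\succ f\}$ are convex. (A5) If $f(s)\succ g(s)$ for all $s\in S$ then $f\succ g$. (A6) If for all $x\in X$, $f\Join x$ implies $g\Join x$, then $f\Join g$. (A7) If $f\Join x$, $x\succ g$, $g\Join y$, $f\succ y$ (with $x,y\in X$), then $f\succ g$.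
   Context: $S$ is a set of states with algebra $\Sigma$; $X$ is a non-singleton convex subset of a real vector space; $\mathcal{F}$ is the set of simple acts $f:S\to X$ ($\Sigma$-measurable, finitely many values) with pointwise mixtures; elements of $X$ are identified with constant acts. $f\Join g$ means $f\not\succ g$ and $g\not\succ f$. *)

From mathcomp Require Import all_boot all_order all_algebra.
From mathcomp Require Import all_classical all_reals.
Set Implicit Arguments. Unset Strict Implicit. Unset Printing Implicit Defensive.
Import Order.TTheory GRing.Theory Num.Theory.
Local Open Scope ring_scope.
Local Open Scope classical_set_scope.

Section Acts.
Variables (R : realType) (V : lmodType R) (S : Type).

Definition is_algebra (Sigma : set (set S)) : Prop :=
  Sigma setT /\ (forall A, Sigma A -> Sigma (~` A)) /\
  (forall A B, Sigma A -> Sigma B -> Sigma (A `|` B)).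

Definition convex_set (X : set V) : Prop :=
  forall x y a, X x -> X y -> 0 <= a <= 1 -> X (a *: x + (1 - a) *: y).

Definition non_singleton (X : set V) : Prop :=
  exists x y, X x /\ X y /\ x <> y.

Definition cst_act (x : V) : S -> V := fun _ => x.

Definition mix (a : R) (f g : S -> V) : S -> V :=
  fun s => a *: f s + (1 - a) *: g s.

Definition simple_act (Sigma : set (set S)) (X : set V) (f : S -> V) : Prop :=
  (forall s, X (f s)) /\ finite_set (range f) /\
  (forall x, Sigma (f @^-1` [set x])).

Variables (Sigma : set (set S)) (X : set V) (pref : (S -> V) -> (S -> V) -> Prop).

Local Notation F := (simple_act Sigma X).

Definition incomp (f g : S -> V) : Prop := ~ pref f g /\ ~ pref g f.

Definition open_in_unit (A : set R) : Prop :=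
  forall a, 0 <= a <= 1 -> A a ->
    exists2 e : R, 0 < e &
      forall b, 0 <= b <= 1 -> `|b - a| < e -> A b.

Definition A1 : Prop :=
  (forall f g, F f -> F g -> pref f g -> ~ pref g f) /\
  (forall f g h, F f -> F g -> F h -> pref f g -> pref g h -> pref f h) /\
  (exists x y, X x /\ X y /\ pref (cst_act x) (cst_act y)) /\
  (forall x y z, X x -> X y -> X z -> pref (cst_act x) (cst_act z) ->
     pref (cst_act x) (cst_act y) \/ pref (cst_act y) (cst_act z)).

Definition A2 : Prop :=
  forall f g h, F f -> F g -> F h ->
    open_in_unit [set a | 0 <= a <= 1 /\ pref (mix a f g) h] /\
    open_in_unit [set a | 0 <= a <= 1 /\ pref h (mix a f g)].

Definition A3 : Prop :=
  forall f g x a, F f -> F g -> X x -> 0 < a < 1 ->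
    (pref f g <-> pref (mix a f (cst_act x)) (mix a g (cst_act x))).

Definition A4 : Prop :=
  forall x, X x ->
    (forall f g a, F f -> F g -> 0 <= a <= 1 ->
       pref f (cst_act x) -> pref g (cst_act x) -> pref (mix a f g) (cst_act x)) /\
    (forall f g a, F f -> F g -> 0 <= a <= 1 ->
       pref (cst_act x) f -> pref (cst_act x) g -> pref (cst_act x) (mix a f g)).

Definition A5 : Prop :=
  forall f g, F f -> F g ->
    (forall s, pref (cst_act (f s)) (cst_act (g s))) -> pref f g.

Definition A6 : Prop :=
  forall f g, F f -> F g ->
    (forall x, X x -> incomp f (cst_act x) -> incomp g (cst_act x)) -> incomp f g.

Definition A7 : Prop :=
  forall f g x y, F f -> F g -> X x -> X y ->
    incomp f (cst_act x) -> pref (cst_act x) g -> incomp g (cst_act y) ->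
    pref f (cst_act y) -> pref f g.

End Acts.

From mathcomp Require Import all_boot all_order all_algebra.
From mathcomp Require Import all_classical all_reals.
Local Open Scope classical_set_scope.

(* If no constant act were
   incomparable with f, the premise of A6 would hold vacuously for f and any
   act g, so f would be incomparable with every act, in particular with the
   constant act of some point of X. *)

Lemma algebra_set0 {S : Type} (Sigma : set (set S)) :
  is_algebra Sigma -> Sigma set0.
Proof. by move=> [SigT [SigC _]]; rewrite -setCT; apply: SigC. Qed.

Lemma simple_act_cst {R : realType} {V : lmodType R} {S : Type}
    {Sigma : set (set S)} {X : set V} {x : V} :
  is_algebra Sigma -> X x -> simple_act Sigma X (cst_act x : S -> V).
Proof.
move=> alg Xx; split=> //; split.
  apply: (@sub_finite_set _ _ [set x]); last exact: finite_set1.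
  by move=> _ [s _ <-].
move=> y; have [<-|nxy] := pselect (x = y).
  have -> : (cst_act x : S -> V) @^-1` [set x] = setT by apply/seteqP; split.
  by case: alg.
have -> : (cst_act x : S -> V) @^-1` [set y] = set0.
  by apply/seteqP; split=> s // /nxy.
exact: algebra_set0.
Qed.

Lemma incompC {R : realType} {V : lmodType R} {S : Type}
    (pref : (S -> V) -> (S -> V) -> Prop) f g :
  incomp pref f g -> incomp pref g f.
Proof. by case. Qed.

Lemma A6_incomp_of_no_incomp_cst {R : realType} {V : lmodType R} {S : Type}
    {Sigma : set (set S)} {X : set V} {pref : (S -> V) -> (S -> V) -> Prop}
    {f g : S -> V} :
  A6 Sigma X pref -> simple_act Sigma X f -> simple_act Sigma X g ->
  (forall x, X x -> ~ incomp pref f (cst_act x)) -> incomp pref f g.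
Proof. by move=> A6 Ff Fg nof; apply: A6 => // x Xx /nof. Qed.

Theorem lemma5 (R : realType) (V : lmodType R) (S : Type)
  (Sigma : set (set S)) (X : set V)
  (pref : (S -> V) -> (S -> V) -> Prop) :
  is_algebra Sigma -> convex_set X -> non_singleton X ->
  A1 Sigma X pref -> A2 Sigma X pref -> A3 Sigma X pref -> A4 Sigma X pref ->
  A5 Sigma X pref -> A6 Sigma X pref -> A7 Sigma X pref ->
  forall f, simple_act Sigma X f ->
    exists x, X x /\ incomp pref (cst_act x : S -> V) f.
Proof.
move=> alg _ [x0 [_ [Xx0 _]]] _ _ _ _ _ A6 _ f Ff.
apply: contrapT => no_incomp.
have no_incomp_f x : X x -> ~ incomp pref f (cst_act x).
  by move=> Xx fx; apply: no_incomp; exists x; split=> //; apply: incompC.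
apply: no_incomp; exists x0; split=> //; apply: incompC.
exact: A6_incomp_of_no_incomp_cst A6 Ff (simple_act_cst alg Xx0) no_incomp_f.
Qed.
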